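(* Let $\kappa=4$ and let $\boldsymbol\pi,Q,U$ be as in the context, and suppose $\nu_{ijj}=0$ for all $1<i\le j\le 4$. Then, after possibly permuting the states (i.e., simultaneously permuting the entries of $\boldsymbol\pi$ and the rows of $U$) and multiplying some columns of $U$ by $-1$, one of the following holds: Case A: $\boldsymbol\pi=(1/4,1/4,1/4,1/4)$ and for some $b,c\ge0$ with $b^2+c^2=2$, $$U=\begin{pmatrix}1&c&b&1\\1&-c&-b&1\\1&-b&c&-1\\1&b&-c&-1\end{pmatrix};$$ Case B: $\boldsymbol\pi=(1/8,1/8,1/4,1/2)$ and $$U=\begin{pmatrix}1&2&\sqrt2&1\\1&-2&\sqrt2&1\\1&0&-\sqrt2&1\\1&0&0&-1\end{pmatrix}.$$
   Context: $\boldsymbol\pi=(\pi_1,\dots,\pi_4)$ with $\pi_i>0$, $\sum\pi_i=1$; $Q$ a $4\times4$ matrix with positive off-diagonal entries, zero row sums, $\operatorname{diag}(\boldsymbol\pi)Q$ symmetric. $U$ is a real matrix with $Q=U\operatorname{diag}(0,\lambda_2,\lambda_3,\lambda_4)U^{-1}$, $0>\lambda_2\ge\lambda_3\ge\lambda_4$, $UU^T=\operatorname{diag}(\boldsymbol\pi)^{-1}$ (equivalently $U^T\operatorname{diag}(\boldsymbol\pi)U=I$), and first column $\mathbf 1$. $\nu_{ijk}=\sum_l\pi_lU_{li}U_{lj}U_{lk}$. *)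

From HB Require Import structures.
From mathcomp Require Import all_boot all_order all_algebra all_fingroup.
Set Implicit Arguments. Unset Strict Implicit. Unset Printing Implicit Defensive.
Import Order.TTheory GRing.Theory Num.Theory.
Local Open Scope ring_scope.

Definition mx_of_rows (R : ringType) (rs : seq (seq R)) : 'M[R]_4 :=
  \matrix_(i < 4, j < 4) nth 0 (nth [::] rs i) j.

Definition nu (R : ringType) (pi : 'rV[R]_4) (U : 'M[R]_4) (i j k : 'I_4) : R :=
  \sum_(l < 4) pi 0 l * U l i * U l j * U l k.

Definition eigdiag (R : ringType) (l2 l3 l4 : R) : 'M[R]_4 :=
  diag_mx (\row_(j < 4) nth 0 [:: 0; l2; l3; l4] j).

Definition perm_pi (R : ringType) (s : 'S_4) (pi : 'rV[R]_4) : 'rV[R]_4 :=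
  \row_(i < 4) pi 0 (s i).
Definition perm_flip_U (R : ringType) (s : 'S_4) (e : 'I_4 -> bool) (U : 'M[R]_4)
  : 'M[R]_4 := \matrix_(i < 4, j < 4) ((-1) ^+ e j * U (s i) j).

Definition caseA_U (R : ringType) (b c : R) : 'M[R]_4 :=
  mx_of_rows [:: [:: 1; c; b; 1];
                 [:: 1; -c; -b; 1];
                 [:: 1; -b; c; -1];
                 [:: 1; b; -c; -1]].

Definition caseB_U (R : rcfType) : 'M[R]_4 :=
  let r := Num.sqrt (2 : R) in
  mx_of_rows [:: [:: 1; 2; r; 1];
                 [:: 1; -2; r; 1];
                 [:: 1; 0; -r; 1];
                 [:: 1; 0; 0; -1]].

Definition rv4 (R : ringType) (a b c d : R) : 'rV[R]_4 :=
  \row_(j < 4) nth 0 [:: a; b; c; d] j.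

From HB Require Import structures.
From mathcomp Require Import all_boot all_order all_algebra all_fingroup.
From mathcomp Require Import ring lra.
Set Implicit Arguments.
Unset Strict Implicit.
Unset Printing Implicit Defensive.
Import Order.TTheory GRing.Theory Num.Theory.
Local Open Scope ring_scope.

(* Write x, y, z for the columns 1, 2, 3 of U.  Of the hypotheses only the
   following matter:
   pi > 0, the columns of U are pi-orthonormal with first column 1, U being
   square its rows are complete (pi_m sum_j U_lj U_mj = delta_lm), and
   nu_ijj = 0 for 0 < i <= j.
   Completeness expands every function w on the states in the columns of U,
   w_l = sum_j U_lj <U_j, w>_pi; for w = z^2, y^2, x^2 the conditions on nu
   kill the coefficients of the columns up to the squared one, giving
       z_l^2 = 1,   y_l^2 = 1 + t z_l,   x_l^2 = 1 + a y_l + q z_l.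
   As <1, z>_pi = 0 the entries of z are not all equal, so permuting states
   and negating columns (which preserves [admissible] and the conclusion
   [normal_form]) brings z to (1,1,-1,-1) or (1,1,1,-1).  In the first case
   the orthogonality relations pair up the states and force pi = 1/4 and the
   matrix of Case A; in the second they force pi_4 = 1/2, x_4 = y_4 = 0,
   y_l^2 = 2 for l < 4, and then successively the data of Case B. *)

(* The four states, also used as the four column indices; the comments
   number them 1..4 as in the paper. *)
Definition i0 : 'I_4 := @Ordinal 4 0 isT.
Definition i1 : 'I_4 := @Ordinal 4 1 isT.
Definition i2 : 'I_4 := @Ordinal 4 2 isT.
Definition i3 : 'I_4 := @Ordinal 4 3 isT.

Lemma sum4 (V : nmodType) (F : 'I_4 -> V) :
  \sum_(i < 4) F i = F i0 + F i1 + F i2 + F i3.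
Proof.
rewrite !big_ord_recr big_ord0 /= add0r.
by congr (F _ + F _ + F _ + F _); apply: val_inj.
Qed.

Lemma ord4P (P : 'I_4 -> Prop) : P i0 -> P i1 -> P i2 -> P i3 -> forall i, P i.
Proof.
move=> P0 P1 P2 P3 [[|[|[|[|//]]]] lt_i4].
- by have -> : Ordinal lt_i4 = i0 by apply: val_inj.
- by have -> : Ordinal lt_i4 = i1 by apply: val_inj.
- by have -> : Ordinal lt_i4 = i2 by apply: val_inj.
- by have -> : Ordinal lt_i4 = i3 by apply: val_inj.
Qed.

Section PlaneArithmetic.
Variable R : realFieldType.

Lemma balanced_weights (p0 p1 u0 u1 : R) : 0 < p0 -> 0 < p1 -> u0 != 0 ->
  p0 * u0 + p1 * u1 = 0 -> u0 ^+ 2 = u1 ^+ 2 -> p0 = p1.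
Proof.
move=> p0_gt0 p1_gt0 u0_neq0 bal sq.
have : (p0 ^+ 2 - p1 ^+ 2) * u0 ^+ 2 = 0.
  transitivity ((p0 * u0 + p1 * u1) * (p0 * u0 - p1 * u1)
                + p1 ^+ 2 * (u1 ^+ 2 - u0 ^+ 2)); first ring.
  by rewrite bal sq mul0r subrr mulr0 addr0.
move/eqP; rewrite mulf_eq0 sqrf_eq0 (negbTE u0_neq0) orbF subr_eq0.
by rewrite eqrXn2 ?ltW // => /eqP.
Qed.

Lemma balanced_pair (p0 p1 x0 x1 y0 y1 a : R) :
  0 < p0 -> 0 < p1 -> p0 + p1 = 1 / 2 ->
  p0 * x0 + p1 * x1 = 0 -> p0 * y0 + p1 * y1 = 0 ->
  2 + x0 * x1 + y0 * y1 = 0 ->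
  y0 ^+ 2 = y1 ^+ 2 -> x0 ^+ 2 - x1 ^+ 2 = a * (y0 - y1) ->
  [/\ p0 = 1 / 4, p1 = 1 / 4, x1 = - x0, y1 = - y0 & x0 ^+ 2 + y0 ^+ 2 = 2].
Proof.
move=> p0_gt0 p1_gt0 psum xbal ybal row ysq xsq.
have p01 : p0 = p1.
  have [y00|y0_neq0] := eqVneq y0 0; last exact: balanced_weights ybal ysq.
  have y10 : y1 = 0 by apply/eqP; rewrite -sqrf_eq0 -ysq y00 expr0n.
  have x0_neq0 : x0 != 0.
    by apply: contra_eqN row => /eqP->; rewrite y00 !mul0r !addr0 pnatr_eq0.
  apply: balanced_weights xbal _ => //; apply/eqP.
  by rewrite -subr_eq0 xsq y00 y10 subrr mulr0.
subst p1; have p0_neq0 : p0 != 0 by rewrite gt_eqF.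
have x1E : x1 = - x0 by apply: (mulfI p0_neq0); lra.
have y1E : y1 = - y0 by apply: (mulfI p0_neq0); lra.
by split=> //; [lra | lra | move: row; rewrite x1E y1E; lra].
Qed.

Lemma sqr_add_eq0 (a b : R) : a ^+ 2 + b ^+ 2 = 0 -> a = 0 /\ b = 0.
Proof.
move/eqP; rewrite paddr_eq0 ?sqr_ge0 // !sqrf_eq0.
by move=> /andP[/eqP-> /eqP->].
Qed.

Lemma quarter_turn (x0 y0 x2 y2 : R) :
  x0 ^+ 2 + y0 ^+ 2 = 2 -> x2 ^+ 2 + y2 ^+ 2 = 2 -> x0 * x2 + y0 * y2 = 0 ->
  (x2 = - y0 /\ y2 = x0) \/ (x2 = y0 /\ y2 = - x0).
Proof.
move=> n0 n2 orth.
have : ((x2 + y0) ^+ 2 + (y2 - x0) ^+ 2) * ((x2 - y0) ^+ 2 + (y2 + x0) ^+ 2) = 0.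
  transitivity ((x0 ^+ 2 + y0 ^+ 2 + (x2 ^+ 2 + y2 ^+ 2)) ^+ 2
    - 4 * ((x0 ^+ 2 + y0 ^+ 2) * (x2 ^+ 2 + y2 ^+ 2) - (x0 * x2 + y0 * y2) ^+ 2)).
    ring.
  rewrite n0 n2 orth; ring.
move/eqP; rewrite mulf_eq0 => /orP[] /eqP /sqr_add_eq0 [e1 e2];
  [left|right]; split; lra.
Qed.

End PlaneArithmetic.

Section Lemma2.
Variable R : rcfType.

Record admissible (pi : 'rV[R]_4) (U : 'M[R]_4) : Prop := Admissible {
  pi_gt0 : forall l, 0 < pi 0 l;
  col0_one : forall l, U l i0 = 1;
  cols_orthonormal : forall j k, \sum_(l < 4) pi 0 l * U l j * U l k = (j == k)%:R;
  rows_complete : forall l m, pi 0 m * \sum_(j < 4) U l j * U m j = (l == m)%:R;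
  nu_vanish : forall i j : 'I_4, (0 < i)%N -> (i <= j)%N -> nu pi U i j j = 0 }.

Definition normal_form (pi : 'rV[R]_4) (U : 'M[R]_4) : Prop :=
  exists (s : 'S_4) (e : 'I_4 -> bool),
    (perm_pi s pi = rv4 (1/4) (1/4) (1/4) (1/4) /\
     exists b c : R, [/\ 0 <= b, 0 <= c, b ^+ 2 + c ^+ 2 = 2 &
                         perm_flip_U s e U = caseA_U b c])
    \/
    (perm_pi s pi = rv4 (1/8) (1/8) (1/4) (1/2) /\
     perm_flip_U s e U = caseB_U R).

(* Relabellings compose, so the conclusion may be proved after relabelling. *)
Lemma normal_form_relabel s e pi U :
  normal_form (perm_pi s pi) (perm_flip_U s e U) -> normal_form pi U.
Proof.
move=> [t [f nf]]; exists (t * s)%g, (fun j => f j (+) e j).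
have -> : perm_pi (t * s) pi = perm_pi t (perm_pi s pi).
  by apply/rowP => i; rewrite !mxE permM.
suff -> : perm_flip_U (t * s) (fun j => f j (+) e j) U =
          perm_flip_U t f (perm_flip_U s e U) by [].
by apply/matrixP => i j; rewrite !mxE permM signr_addb mulrA.
Qed.

Lemma sum_perm (s : 'S_4) (F : 'I_4 -> R) :
  \sum_(l < 4) F (s l) = \sum_(l < 4) F l.
Proof. by rewrite [RHS](reindex_inj (@perm_inj _ s)). Qed.

(* Relabelling states and negating columns other than the constant one
   preserves the hypotheses: every quantity involved is a sum over all
   states, multiplied by an even power of each sign. *)
Lemma admissible_relabel s e pi U : e i0 = false -> admissible pi U ->
  admissible (perm_pi s pi) (perm_flip_U s e U).
Proof.
move=> e0 [pi_pos col0 orth compl nu0]; split.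
- by move=> l; rewrite mxE.
- by move=> l; rewrite mxE e0 mul1r col0.
- move=> j k.
  transitivity ((-1) ^+ e j * (-1) ^+ e k *
                \sum_(l < 4) pi 0 (s l) * U (s l) j * U (s l) k).
    by rewrite mulr_sumr; apply: eq_bigr => l _; rewrite !mxE; ring.
  rewrite (sum_perm s (fun l => pi 0 l * U l j * U l k)) orth.
  by case: eqVneq => [->|_]; rewrite ?mulr0 // mulr1 -expr2 sqrr_sign.
- move=> l m; rewrite mxE -(inj_eq (@perm_inj _ s)) -compl.
  congr (_ * _); apply: eq_bigr => j _; rewrite !mxE.
  by rewrite mulrACA -expr2 sqrr_sign mul1r.
- move=> i j i_gt0 le_ij.
  transitivity ((-1) ^+ e i * (-1) ^+ e j * (-1) ^+ e j * nu pi U i j j).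
    rewrite /nu -(sum_perm s (fun l => pi 0 l * U l i * U l j * U l j)).
    by rewrite mulr_sumr; apply: eq_bigr => l _; rewrite !mxE; ring.
  by rewrite nu0 // mulr0.
Qed.

Definition swap_rows (a b : 'I_4) (U : 'M[R]_4) : 'M[R]_4 :=
  perm_flip_U (tperm a b) (fun=> false) U.
Definition flip_col (k : 'I_4) (U : 'M[R]_4) : 'M[R]_4 :=
  perm_flip_U 1 (pred1 k) U.

Lemma swap_rowsE a b U l j : swap_rows a b U l j = U (tperm a b l) j.
Proof. by rewrite mxE mul1r. Qed.

Lemma flip_col_same k U l : flip_col k U l k = - U l k.
Proof. by rewrite mxE /= eqxx perm1 mulN1r. Qed.

Lemma flip_col_other k U l j : j != k -> flip_col k U l j = U l j.
Proof. by move=> /negbTE jk; rewrite mxE /= jk perm1 mul1r. Qed.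

Lemma swap_rows_wlog a b pi U : admissible pi U ->
  (admissible (perm_pi (tperm a b) pi) (swap_rows a b U) ->
   normal_form (perm_pi (tperm a b) pi) (swap_rows a b U)) ->
  normal_form pi U.
Proof.
move=> adm nf; apply: (@normal_form_relabel (tperm a b) (fun=> false)).
by apply: nf; apply: admissible_relabel.
Qed.

Lemma flip_col_wlog k pi U : k != i0 -> admissible pi U ->
  (admissible pi (flip_col k U) -> normal_form pi (flip_col k U)) ->
  normal_form pi U.
Proof.
move=> k0 adm nf; have pi1 : perm_pi 1 pi = pi by apply/rowP => i; rewrite mxE perm1.
apply: (@normal_form_relabel 1 (pred1 k)); rewrite pi1; apply: nf.
by rewrite -[X in admissible X]pi1; apply: admissible_relabel; rewrite //= eq_sym (negbTE k0).
Qed.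

Section AdmissibleFacts.
Variables (pi : 'rV[R]_4) (U : 'M[R]_4).
Hypothesis adm : admissible pi U.

Lemma pi_total : pi 0 i0 + pi 0 i1 + pi 0 i2 + pi 0 i3 = 1.
Proof.
by have := cols_orthonormal adm i0 i0; rewrite sum4 !(col0_one adm) !mulr1.
Qed.

Lemma col_mean j : j != i0 ->
  pi 0 i0 * U i0 j + pi 0 i1 * U i1 j + pi 0 i2 * U i2 j + pi 0 i3 * U i3 j = 0.
Proof.
move=> /negbTE j0; have := cols_orthonormal adm j i0.
by rewrite j0 sum4 !(col0_one adm) !mulr1.
Qed.

Lemma col_orth j k : j != k ->
  pi 0 i0 * U i0 j * U i0 k + pi 0 i1 * U i1 j * U i1 k
  + pi 0 i2 * U i2 j * U i2 k + pi 0 i3 * U i3 j * U i3 k = 0.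
Proof. by move=> /negbTE jk; have := cols_orthonormal adm j k; rewrite jk sum4. Qed.

Lemma row_orth l m : l != m ->
  1 + U l i1 * U m i1 + U l i2 * U m i2 + U l i3 * U m i3 = 0.
Proof.
move=> /negbTE lm; have := rows_complete adm l m; rewrite lm => /eqP.
rewrite mulf_eq0 gt_eqF ?(pi_gt0 adm) //= sum4 !(col0_one adm) mulr1 => /eqP.
by rewrite -!addrA.
Qed.

Lemma expansion (w : 'I_4 -> R) l :
  w l = \sum_(j < 4) U l j * \sum_(m < 4) pi 0 m * U m j * w m.
Proof.
under eq_bigr do rewrite big_distrr; rewrite exchange_big /=.
rewrite (eq_bigr (fun m => pi 0 m * (\sum_(j < 4) U l j * U m j) * w m)); last first.
  by move=> m _; rewrite mulr_sumr mulr_suml; apply: eq_bigr => j _; ring.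
under eq_bigr do rewrite (rows_complete adm).
rewrite (bigD1 l) //= eqxx mul1r big1 ?addr0 // => m /negbTE.
by rewrite eq_sym => ->; rewrite mul0r.
Qed.

Lemma sq_coef0 k : \sum_(m < 4) pi 0 m * U m i0 * U m k ^+ 2 = 1.
Proof.
transitivity (\sum_(m < 4) pi 0 m * U m k * U m k).
  by apply: eq_bigr => m _; rewrite (col0_one adm); ring.
by rewrite (cols_orthonormal adm) eqxx.
Qed.

Lemma sq_coef_low (j k : 'I_4) : (0 < j)%N -> (j <= k)%N ->
  \sum_(m < 4) pi 0 m * U m j * U m k ^+ 2 = 0.
Proof.
move=> j_gt0 le_jk; rewrite -[RHS](nu_vanish adm j_gt0 le_jk).
by apply: eq_bigr => m _; ring.
Qed.

Lemma col3_sq l : U l i3 ^+ 2 = 1.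
Proof.
rewrite (expansion (fun m => U m i3 ^+ 2)) sum4 sq_coef0 !sq_coef_low //.
by rewrite (col0_one adm); ring.
Qed.

Lemma col3_sign l : U l i3 = 1 \/ U l i3 = -1.
Proof. by have /eqP := col3_sq l; rewrite sqrf_eq1 => /orP[] /eqP; [left|right]. Qed.

Lemma col2_sq : exists t, forall l, U l i2 ^+ 2 = 1 + t * U l i3.
Proof.
exists (\sum_(m < 4) pi 0 m * U m i3 * U m i2 ^+ 2) => l.
rewrite (expansion (fun m => U m i2 ^+ 2)) sum4 sq_coef0.
rewrite (@sq_coef_low i1 i2) // (@sq_coef_low i2 i2) //.
by rewrite (col0_one adm); ring.
Qed.

Lemma col1_sq : exists a q, forall l, U l i1 ^+ 2 = 1 + a * U l i2 + q * U l i3.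
Proof.
exists (\sum_(m < 4) pi 0 m * U m i2 * U m i1 ^+ 2),
       (\sum_(m < 4) pi 0 m * U m i3 * U m i1 ^+ 2) => l.
rewrite (expansion (fun m => U m i1 ^+ 2)) sum4 sq_coef0 (@sq_coef_low i1 i1) //.
by rewrite (col0_one adm); ring.
Qed.

Lemma caseA_facts : U i0 i3 = 1 -> U i1 i3 = 1 -> U i2 i3 = -1 -> U i3 i3 = -1 ->
  [/\ forall l, pi 0 l = 1 / 4,
      [/\ U i1 i1 = - U i0 i1, U i1 i2 = - U i0 i2,
          U i3 i1 = - U i2 i1 & U i3 i2 = - U i2 i2],
      U i0 i1 ^+ 2 + U i0 i2 ^+ 2 = 2,
      U i2 i1 ^+ 2 + U i2 i2 ^+ 2 = 2
    & U i0 i1 * U i2 i1 + U i0 i2 * U i2 i2 = 0].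
Proof.
move=> z0 z1 z2 z3; have pos := pi_gt0 adm.
have [t ysq] := col2_sq; have [a [q xsq]] := col1_sq.
have := pi_total; have := @col_mean i3 isT; rewrite z0 z1 z2 z3 => zmean ptot.
have := @col_mean i1 isT; have := @col_orth i1 i3 isT; rewrite z0 z1 z2 z3 => xz xmean.
have := @col_mean i2 isT; have := @col_orth i2 i3 isT; rewrite z0 z1 z2 z3 => yz ymean.
have := @row_orth i0 i1 isT; have := @row_orth i2 i3 isT.
rewrite z0 z1 z2 z3 => row23 row01.
have [p0E p1E x1E y1E n0] := @balanced_pair _ (pi 0 i0) (pi 0 i1)
  (U i0 i1) (U i1 i1) (U i0 i2) (U i1 i2) a (pos i0) (pos i1)
  ltac:(lra) ltac:(lra) ltac:(lra) ltac:(lra)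
  ltac:(by rewrite !ysq z0 z1) ltac:(by rewrite !xsq z0 z1; ring).
have [p2E p3E x3E y3E n2] := @balanced_pair _ (pi 0 i2) (pi 0 i3)
  (U i2 i1) (U i3 i1) (U i2 i2) (U i3 i2) a (pos i2) (pos i3)
  ltac:(lra) ltac:(lra) ltac:(lra) ltac:(lra)
  ltac:(by rewrite !ysq z2 z3) ltac:(by rewrite !xsq z2 z3; ring).
split=> //; first exact: ord4P.
by have := @row_orth i0 i2 isT; rewrite z0 z2; lra.
Qed.

(* Sign pattern z = (1,1,1,-1): the odd state has weight 1/2 and x = y = 0
   there, which forces t = q = 1 in the expansions of y^2 and x^2. *)
Lemma caseB_facts : U i0 i3 = 1 -> U i1 i3 = 1 -> U i2 i3 = 1 -> U i3 i3 = -1 ->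
  [/\ pi 0 i3 = 1 / 2, U i3 i1 = 0, U i3 i2 = 0,
      forall l, U l i2 ^+ 2 = 1 + U l i3
    & exists a, forall l, U l i1 ^+ 2 = 1 + a * U l i2 + U l i3].
Proof.
move=> z0 z1 z2 z3; have p3_neq0 : pi 0 i3 != 0 by rewrite gt_eqF ?(pi_gt0 adm).
have [t ysq] := col2_sq; have [a [q xsq]] := col1_sq.
have := pi_total; have := @col_mean i3 isT; rewrite z0 z1 z2 z3 => zmean ptot.
have := @col_mean i1 isT; have := @col_orth i1 i3 isT; rewrite z0 z1 z2 z3 => xz xmean.
have := @col_mean i2 isT; have := @col_orth i2 i3 isT; rewrite z0 z1 z2 z3 => yz ymean.
have x3E : U i3 i1 = 0 by apply: (mulfI p3_neq0); lra.
have y3E : U i3 i2 = 0 by apply: (mulfI p3_neq0); lra.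
have t1 : t = 1 by have := ysq i3; rewrite y3E z3 expr0n /=; lra.
have q1 : q = 1 by have := xsq i3; rewrite x3E y3E z3 expr0n /=; lra.
split=> //; first lra.
  by move=> l; rewrite ysq t1 mul1r.
by exists a => l; rewrite xsq q1 mul1r.
Qed.

Lemma caseB_col2_neq0 :
  U i0 i3 = 1 -> U i1 i3 = 1 -> U i2 i3 = 1 -> U i3 i3 = -1 ->
  forall l, U l i3 = 1 -> U l i2 != 0.
Proof.
move=> z0 z1 z2 z3 l zl; have [_ _ _ ysq _] := caseB_facts z0 z1 z2 z3.
by rewrite -sqrf_eq0 ysq zl gt_eqF // addr_gt0 ?ltr01.
Qed.

End AdmissibleFacts.

Lemma caseA_canonical pi U : admissible pi U ->
  U i0 i3 = 1 -> U i1 i3 = 1 -> U i2 i3 = -1 -> U i3 i3 = -1 ->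
  0 <= U i0 i1 -> 0 <= U i0 i2 -> U i2 i1 = - U i0 i2 -> U i2 i2 = U i0 i1 ->
  normal_form pi U.
Proof.
move=> adm z0 z1 z2 z3 x0_ge0 y0_ge0 x2E y2E.
have [piE [x1E y1E x3E y3E] n0 _ _] := caseA_facts adm z0 z1 z2 z3.
exists 1%g, (fun=> false); left; split.
  by apply/rowP; apply: ord4P; rewrite !mxE perm1 piE.
exists (U i0 i2), (U i0 i1); split=> //; first by rewrite addrC.
apply/matrixP; apply: ord4P; apply: ord4P; rewrite !mxE perm1 mul1r /=;
  by rewrite ?(col0_one adm) ?x1E ?y1E ?x3E ?y3E ?x2E ?y2E ?z0 ?z1 ?z2 ?z3 ?opprK.
Qed.

(* Case A: normalise signs by negating columns, then the direction of the
   quarter turn by exchanging the states of the second pair. *)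
Lemma caseA_normal pi U : admissible pi U ->
  U i0 i3 = 1 -> U i1 i3 = 1 -> U i2 i3 = -1 -> U i3 i3 = -1 ->
  normal_form pi U.
Proof.
move=> adm z0 z1 z2 z3.
wlog x0_ge0 : U adm z0 z1 z2 z3 / 0 <= U i0 i1.
  move=> base; have [|x0_lt0] := lerP 0 (U i0 i1); first exact: base.
  apply: (@flip_col_wlog i1) => // adm'; apply: base => //;
    by rewrite ?flip_col_same ?flip_col_other // oppr_ge0 ltW.
wlog y0_ge0 : U adm z0 z1 z2 z3 x0_ge0 / 0 <= U i0 i2.
  move=> base; have [|y0_lt0] := lerP 0 (U i0 i2); first exact: base.
  apply: (@flip_col_wlog i2) => // adm'; apply: base => //;
    by rewrite ?flip_col_same ?flip_col_other // oppr_ge0 ltW.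
have [_ [_ _ x3E y3E] n0 n2 orth] := caseA_facts adm z0 z1 z2 z3.
have [[x2E y2E]|[x2E y2E]] := quarter_turn n0 n2 orth.
  exact: caseA_canonical.
apply: (swap_rows_wlog (a:=i2) (b:=i3) adm) => adm'.
apply: caseA_canonical adm' _ _ _ _ _ _ _ _;
  by rewrite !swap_rowsE ?tpermL ?tpermR ?tpermD // ?x3E ?y3E ?x2E ?y2E ?opprK.
Qed.

Lemma caseB_col2 pi U : admissible pi U ->
  U i0 i3 = 1 -> U i1 i3 = 1 -> U i2 i3 = 1 -> U i3 i3 = -1 ->
  0 < U i0 i2 -> 0 < U i1 i2 -> U i2 i2 < 0 ->
  [/\ U i0 i2 = Num.sqrt 2, U i1 i2 = Num.sqrt 2, U i2 i2 = - Num.sqrt 2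
    & pi 0 i2 = pi 0 i0 + pi 0 i1].
Proof.
move=> adm z0 z1 z2 z3 y0_gt0 y1_gt0 y2_lt0.
have [_ _ y3E ysq _] := caseB_facts adm z0 z1 z2 z3.
have norm_y l : U l i3 = 1 -> `|U l i2| = Num.sqrt 2.
  by move=> zl; rewrite -sqrtr_sqr ysq zl.
have y0E : U i0 i2 = Num.sqrt 2 by rewrite -(norm_y i0 z0) gtr0_norm.
have y1E : U i1 i2 = Num.sqrt 2 by rewrite -(norm_y i1 z1) gtr0_norm.
have y2E : U i2 i2 = - Num.sqrt 2 by rewrite -(norm_y i2 z2) ltr0_norm ?opprK.
split=> //; have r_neq0 : Num.sqrt 2 != 0 :> R by rewrite sqrtr_eq0 -ltNge ltr0n.
apply: (mulfI r_neq0); have := @col_mean _ _ adm i2 isT.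
by rewrite y0E y1E y2E y3E; lra.
Qed.

(* Case B once y is normalised: completeness of the rows and the expansion of
   x^2 determine x, then the weighted mean of x determines pi. *)
Lemma caseB_canonical pi U : admissible pi U ->
  U i0 i3 = 1 -> U i1 i3 = 1 -> U i2 i3 = 1 -> U i3 i3 = -1 ->
  0 < U i0 i2 -> 0 < U i1 i2 -> U i2 i2 < 0 -> normal_form pi U.
Proof.
move=> adm z0 z1 z2 z3 y0_gt0 y1_gt0 y2_lt0.
wlog x0_ge0 : U adm z0 z1 z2 z3 y0_gt0 y1_gt0 y2_lt0 / 0 <= U i0 i1.
  move=> base; have [|x0_lt0] := lerP 0 (U i0 i1); first exact: base.
  apply: (@flip_col_wlog i1) => // adm'; apply: base => //;
    by rewrite ?flip_col_same ?flip_col_other // oppr_ge0 ltW.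
have [p3E x3E y3E _ [a xsq]] := caseB_facts adm z0 z1 z2 z3.
have [y0E y1E y2E p2E] := caseB_col2 adm z0 z1 z2 z3 y0_gt0 y1_gt0 y2_lt0.
have r_sq : Num.sqrt 2 ^+ 2 = 2 :> R by rewrite sqr_sqrtr ?ler0n.
have := @row_orth _ _ adm i0 i1 isT; have := @row_orth _ _ adm i0 i2 isT.
rewrite z0 z1 z2 y0E y1E y2E => row02 row01.
have x0x2 : U i0 i1 * U i2 i1 = 0 by lra.
have x0x1 : U i0 i1 * U i1 i1 = -4 by lra.
have x0_neq0 : U i0 i1 != 0.
  by apply: contra_eqN x0x1 => /eqP->; rewrite mul0r eq_sym oppr_eq0 pnatr_eq0.
have x2E : U i2 i1 = 0 by apply/eqP; move/eqP: x0x2; rewrite mulf_eq0 (negbTE x0_neq0).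
have ar : a * Num.sqrt 2 = 2 by have := xsq i2; rewrite x2E y2E z2 expr0n /=; lra.
have x0E : U i0 i1 = 2.
  apply/eqP; rewrite -(@eqrXn2 _ 2) ?ler0n //; apply/eqP.
  by rewrite xsq y0E z0; lra.
have x1E : U i1 i1 = -2 by move: x0x1; rewrite x0E; lra.
have := pi_total adm; have := @col_mean _ _ adm i1 isT.
rewrite x0E x1E x2E x3E => xmean ptot.
exists 1%g, (fun=> false); right; split.
  by apply/rowP; apply: ord4P; rewrite !mxE perm1 /=; lra.
apply/matrixP; apply: ord4P; apply: ord4P; rewrite !mxE perm1 mul1r /=;
  by rewrite ?(col0_one adm) ?x0E ?x1E ?x2E ?x3E ?y0E ?y1E ?y2E ?y3E ?z0 ?z1 ?z2 ?z3.
Qed.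

(* Case B: move the entry of y whose sign differs from the others to state 3
   and make it negative. *)
Lemma caseB_normal pi U : admissible pi U ->
  U i0 i3 = 1 -> U i1 i3 = 1 -> U i2 i3 = 1 -> U i3 i3 = -1 ->
  normal_form pi U.
Proof.
move=> adm z0 z1 z2 z3.
wlog y2_lt0 : U adm z0 z1 z2 z3 / U i2 i2 < 0.
  move=> base; have /lt_total/orP[|y2_gt0] := caseB_col2_neq0 adm z0 z1 z2 z3 z2.
    exact: base.
  apply: (@flip_col_wlog i2) => // adm'; apply: base => //;
    by rewrite ?flip_col_same ?flip_col_other // oppr_lt0.
have y_neq0 := caseB_col2_neq0 adm z0 z1 z2 z3.
have /lt_total/orP[y0_lt0|y0_gt0] := y_neq0 i0 z0;
  have /lt_total/orP[y1_lt0|y1_gt0] := y_neq0 i1 z1.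
- have [_ _ y3E _ _] := caseB_facts adm z0 z1 z2 z3.
  have pos := pi_gt0 adm; have := pos i0; have := pos i1; have := pos i2.
  by have := @col_mean _ _ adm i2 isT; rewrite y3E; nra.
- apply: (@flip_col_wlog i2) => // adm1.
  apply: (swap_rows_wlog (a:=i1) (b:=i2) adm1) => adm2.
  apply: caseB_canonical adm2 _ _ _ _ _ _ _;
    by rewrite !swap_rowsE ?tpermL ?tpermR ?tpermD // ?flip_col_same
               ?flip_col_other // ?oppr_gt0 ?oppr_lt0.
- apply: (@flip_col_wlog i2) => // adm1.
  apply: (swap_rows_wlog (a:=i0) (b:=i2) adm1) => adm2.
  apply: caseB_canonical adm2 _ _ _ _ _ _ _;
    by rewrite !swap_rowsE ?tpermL ?tpermR ?tpermD // ?flip_col_same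
               ?flip_col_other // ?oppr_gt0 ?oppr_lt0.
- exact: caseB_canonical.
Qed.

Lemma normal_form_of_admissible pi U : admissible pi U -> normal_form pi U.
Proof.
move=> adm.
wlog z3 : U adm / U i3 i3 = -1.
  move=> base; have [z3|] := col3_sign adm i3; last exact: base.
  apply: (@flip_col_wlog i3) => // adm'; apply: base => //.
  by rewrite flip_col_same z3.
wlog z0 : pi U adm z3 / U i0 i3 = 1.
  move=> base; have [|z0] := col3_sign adm i0; first exact: base.
  have [z1|z1] := col3_sign adm i1.
    apply: (swap_rows_wlog (a:=i0) (b:=i1) adm) => adm'.
    by apply: base adm' _ _; rewrite !swap_rowsE ?tpermL ?tpermD.
  have [z2|z2] := col3_sign adm i2.
    apply: (swap_rows_wlog (a:=i0) (b:=i2) adm) => adm'.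
    by apply: base adm' _ _; rewrite !swap_rowsE ?tpermL ?tpermD.
  have := pi_total adm; have := @col_mean _ _ adm i3 isT.
  by rewrite z0 z1 z2 z3; lra.
have [z1|z1] := col3_sign adm i1; have [z2|z2] := col3_sign adm i2.
- exact: caseB_normal.
- exact: caseA_normal.
- apply: (swap_rows_wlog (a:=i1) (b:=i2) adm) => adm'.
  by apply: caseA_normal adm' _ _ _ _; rewrite !swap_rowsE ?tpermL ?tpermR ?tpermD.
- apply: (@flip_col_wlog i3) => // adm1.
  apply: (swap_rows_wlog (a:=i0) (b:=i3) adm1) => adm2.
  apply: caseB_normal adm2 _ _ _ _;
    by rewrite !swap_rowsE ?tpermL ?tpermR ?tpermD // flip_col_same
               ?z0 ?z1 ?z2 ?z3 ?opprK.
Qed.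

End Lemma2.

Theorem lemma2 (R : rcfType) (pi : 'rV[R]_4) (Q U : 'M[R]_4) (l2 l3 l4 : R) :
  (forall i, 0 < pi 0 i) ->
  \sum_(i < 4) pi 0 i = 1 ->
  (forall i j : 'I_4, i != j -> 0 < Q i j) ->
  (forall i : 'I_4, \sum_(j < 4) Q i j = 0) ->
  (diag_mx pi *m Q)^T = diag_mx pi *m Q ->
  Q = U *m eigdiag l2 l3 l4 *m invmx U ->
  0 > l2 -> l2 >= l3 -> l3 >= l4 ->
  U^T *m diag_mx pi *m U = 1%:M ->
  (forall l : 'I_4, U l 0 = 1) ->
  (forall i j : 'I_4, (0 < i)%N -> (i <= j)%N -> nu pi U i j j = 0) ->
  exists (s : 'S_4) (e : 'I_4 -> bool),
    (perm_pi s pi = rv4 (1/4) (1/4) (1/4) (1/4) /\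
     exists b c : R, [/\ 0 <= b, 0 <= c, b ^+ 2 + c ^+ 2 = 2 &
                         perm_flip_U s e U = caseA_U b c])
    \/
    (perm_pi s pi = rv4 (1/8) (1/8) (1/4) (1/2) /\
     perm_flip_U s e U = caseB_U R).
Proof.
move=> pi_pos _ _ _ _ _ _ _ _ orthonormal col0 nu0.
apply: normal_form_of_admissible; split=> //.
- by have -> : i0 = 0 by apply: val_inj.
- move=> j k; have := congr1 (fun M : 'M[R]_4 => M j k) orthonormal.
  rewrite /= !mxE => <-; apply: eq_bigr => l _.
  by rewrite mul_mx_diag !mxE; ring.
- move=> l m; have := congr1 (fun M : 'M[R]_4 => M l m) (mulmx1C orthonormal).
  rewrite /= !mxE => <-; rewrite mulr_sumr; apply: eq_bigr => j _.
  by rewrite mul_mx_diag !mxE; ring.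
Qed.
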